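(* Let $G$ be a group, written multiplicatively, with more than $3$ elements, and let $F=G\cup\{0\}$ be the hyperfield with multiplication extending that of $G$ by $x\cdot 0=0\cdot x=0$ and hyperaddition given by $x+y=F\setminus\{0,x,y\}$ for distinct $x,y\in G$, $x+x=\{0,x\}$ for $x\in G$, and $x+0=0+x=\{x\}$ for $x\in F$. Suppose $|F|\ge 6$, and let $x,y,z$ be three distinct nonzero elements of $F$. Then $x+y+z=F$.
   Context: For subsets $A,B\subseteq F$ one sets $A+B=\bigcup_{a\in A,b\in B}(a+b)$, identifying an element with the singleton containing it; thus $x+y+z=(x+y)+z$. *)

(* The hyperfield F = G ∪ {0} is modelled as [option G],
   with [None] playing the role of 0 and [Some g] the element g of G. *)

(* Hyperaddition as a relation: [hadd x y w] means w ∈ x + y. *)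
Definition hadd {G : Type} (x y w : option G) : Prop :=
  match x, y with
  | None, _ => w = y
  | _, None => w = x
  | Some a, Some b =>
      (a = b /\ (w = None \/ w = x))
      \/ (a <> b /\ w <> None /\ w <> x /\ w <> y)
  end.

Definition hsum {G : Type} (A B : option G -> Prop) : option G -> Prop :=
  fun w => exists a b, A a /\ B b /\ hadd a b w.

Definition hsing {G : Type} (x : option G) : option G -> Prop := fun w => w = x.

Definition hsum3 {G : Type} (x y z : option G) : option G -> Prop :=
  hsum (hsum (hsing x) (hsing y)) (hsing z).

Record is_group {G : Type} (mul : G -> G -> G) (e : G) (inv : G -> G) : Prop := {
  grp_assoc : forall a b c, mul a (mul b c) = mul (mul a b) c;
  grp_idl : forall a, mul e a = a;
  grp_idr : forall a, mul a e = a;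
  grp_invl : forall a, mul (inv a) a = e;
  grp_invr : forall a, mul a (inv a) = e
}.

From Stdlib Require Import List Classical Lia.
Import ListNotations.

(* A sum of three distinct nonzero elements reaches w through an intermediate
   s ∈ x + y: for w ∈ {0, z} take s = z, since z + z = {0, z}; otherwise,
   having at least six elements, F has an s outside {0, x, y, z, w}, and then
   w ∈ s + z. *)

Lemma exists_notin_of_longer {T : Type} (l s : list T) :
  NoDup l -> length s < length l -> exists a, In a l /\ ~ In a s.
Proof.
  intros Hl Hlen.
  apply NNPP; intros Hnone.
  assert (Hincl : incl l s).
  { intros a Ha; apply NNPP; intros Hs; apply Hnone; now exists a. }
  pose proof (NoDup_incl_length Hl Hincl); lia.
Qed.

Lemma exists_avoiding_five {T : Type} (b1 b2 b3 b4 b5 b6 p1 p2 p3 p4 p5 : T) :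
  b1 <> b2 /\ b1 <> b3 /\ b1 <> b4 /\ b1 <> b5 /\ b1 <> b6 /\
  b2 <> b3 /\ b2 <> b4 /\ b2 <> b5 /\ b2 <> b6 /\
  b3 <> b4 /\ b3 <> b5 /\ b3 <> b6 /\
  b4 <> b5 /\ b4 <> b6 /\ b5 <> b6 ->
  exists a, a <> p1 /\ a <> p2 /\ a <> p3 /\ a <> p4 /\ a <> p5.
Proof.
  intros Hb.
  assert (Hnodup : NoDup [b1; b2; b3; b4; b5; b6]).
  { repeat constructor; simpl; intuition congruence. }
  destruct (exists_notin_of_longer _ [p1; p2; p3; p4; p5] Hnodup)
    as (a & _ & Ha); [simpl; lia|].
  exists a; simpl in Ha; intuition.
Qed.

Lemma hadd_diag {G : Type} (a : G) (w : option G) :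
  w = None \/ w = Some a -> hadd (Some a) (Some a) w.
Proof. now left. Qed.

Lemma hadd_neq {G : Type} (a b : G) (w : option G) :
  a <> b -> w <> None -> w <> Some a -> w <> Some b -> hadd (Some a) (Some b) w.
Proof. now right. Qed.

Lemma hsum3_via {G : Type} (x y z s w : option G) :
  hadd x y s -> hadd s z w -> hsum3 x y z w.
Proof.
  intros Hxy Hsz.
  exists s, z; repeat split; [|exact Hsz].
  now exists x, y.
Qed.

Theorem mainTheorem4 (G : Type) (mul : G -> G -> G) (e : G) (inv : G -> G)
  (hgrp : is_group mul e inv)
  (hG : exists a1 a2 a3 a4 : G,
      a1 <> a2 /\ a1 <> a3 /\ a1 <> a4 /\ a2 <> a3 /\ a2 <> a4 /\ a3 <> a4)
  (hF : exists b1 b2 b3 b4 b5 b6 : option G,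
      b1 <> b2 /\ b1 <> b3 /\ b1 <> b4 /\ b1 <> b5 /\ b1 <> b6 /\
      b2 <> b3 /\ b2 <> b4 /\ b2 <> b5 /\ b2 <> b6 /\
      b3 <> b4 /\ b3 <> b5 /\ b3 <> b6 /\
      b4 <> b5 /\ b4 <> b6 /\ b5 <> b6)
  (x y z : option G)
  (hx : x <> None) (hy : y <> None) (hz : z <> None)
  (hxy : x <> y) (hxz : x <> z) (hyz : y <> z) :
  forall w : option G, hsum3 x y z w.
Proof.
  intros w.
  destruct x as [a|], y as [b|], z as [c|]; try congruence.
  destruct (classic (w = None \/ w = Some c)) as [Hw | Hw].
  - apply (hsum3_via _ _ _ (Some c)).
    + apply hadd_neq; congruence.
    + now apply hadd_diag.
  - destruct hF as (b1 & b2 & b3 & b4 & b5 & b6 & Hb).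
    destruct (exists_avoiding_five b1 b2 b3 b4 b5 b6
                None (Some a) (Some b) (Some c) w Hb)
      as ([d|] & Hd0 & Hda & Hdb & Hdc & Hdw); [|congruence].
    apply (hsum3_via _ _ _ (Some d)).
    + apply hadd_neq; congruence.
    + apply hadd_neq; try congruence; intuition.
Qed.
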